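(* Let $(Q,\cdot,e)$ be a double Ward quasigroup and define $x\diamond y=(e\cdot x)\cdot(e\cdot y)$ (so $(Q,\diamond)$ is a group with identity $e$). Then $(Q,\cdot,\diamond)$ is a lateral double magma, i.e. $(x\cdot y)\diamond(z\cdot w)=(y\diamond x)\cdot(w\diamond z)$ for all $x,y,z,w\in Q$. Moreover, if $(Q,\circ)$ is a group with identity $e$ such that $(x\cdot y)\circ(z\cdot w)=(y\circ x)\cdot(w\circ z)$ for all $x,y,z,w\in Q$, then $x\circ y=x\diamond y$ for all $x,y\in Q$.
   Context: A quasigroup is a magma in which $ax=b$ and $ya=b$ have unique solutions for all $a,b$. A double Ward quasigroup $(Q,\cdot,e)$ is a quasigroup with an element $e$ such that $(ee\cdot xz)(ey\cdot z)=xy$ for all $x,y,z$. *)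

Definition is_quasigroup {Q : Type} (mul : Q -> Q -> Q) : Prop :=
  (forall a b : Q, exists! x : Q, mul a x = b) /\
  (forall a b : Q, exists! y : Q, mul y a = b).

Definition is_double_ward {Q : Type} (mul : Q -> Q -> Q) (e : Q) : Prop :=
  is_quasigroup mul /\
  forall x y z : Q,
    mul (mul (mul e e) (mul x z)) (mul (mul e y) z) = mul x y.

Definition is_group_with_id {Q : Type} (op : Q -> Q -> Q) (e : Q) : Prop :=
  (forall x y z : Q, op (op x y) z = op x (op y z)) /\
  (forall x : Q, op e x = x /\ op x e = x) /\
  (forall x : Q, exists y : Q, op x y = e /\ op y x = e).

Definition diamond {Q : Type} (mul : Q -> Q -> Q) (e : Q) (x y : Q) : Q :=
  mul (mul e x) (mul e y).

Definition lateral_double_magma {Q : Type} (mul op : Q -> Q -> Q) : Prop :=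
  forall x y z w : Q, op (mul x y) (mul z w) = mul (op y x) (op w z).


(* The Ward identity forces [e e = e], after which it yields [(e y) y = e],
   [e x = x e] and [e (e x) = x]; so [x |-> e x] is an involutive
   anti-automorphism of [(Q, .)] and [x <> y = e (y x)].  Lateralness of
   [<>] is then the anti-automorphism property, and any lateral group
   operation [o] with identity [e] is pinned down by evaluating the lateral
   law at [(e x) e] and [(e y) e], which reduce to [x] and [y]. *)

Section Quasigroup.

Context {Q : Type} {mul : Q -> Q -> Q}.
Hypothesis hQ : is_quasigroup mul.

Lemma quasigroup_cancel_r (a x y : Q) : mul x a = mul y a -> x = y.
Proof.
  intros Hxy. destruct (proj2 hQ a (mul x a)) as [u [_ Hu]].
  rewrite <- (Hu x eq_refl). apply Hu. now symmetry.
Qed.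

Lemma quasigroup_solve_l (a b : Q) : exists x, mul a x = b.
Proof. destruct (proj1 hQ a b) as [x [Hx _]]. now exists x. Qed.

End Quasigroup.

Section DoubleWard.

Context {Q : Type} {mul : Q -> Q -> Q} {e : Q}.
Hypothesis hW : is_double_ward mul e.

Let cancel_r := quasigroup_cancel_r (proj1 hW).
Let solve_l := quasigroup_solve_l (proj1 hW).
Let ward := proj2 hW.

Lemma ward_square_const (u y : Q) :
  mul (mul (mul e e) u) u = mul (mul e y) y.
Proof. destruct (solve_l (mul e y) u) as [z <-]. apply ward. Qed.

Lemma ward_ee : mul e e = e.
Proof. apply (cancel_r e), (cancel_r e). now rewrite (ward_square_const e e). Qed.

Lemma ward_reduced (x y z : Q) :
  mul (mul e (mul x z)) (mul (mul e y) z) = mul x y.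
Proof. pose proof (ward x y z) as H. now rewrite ward_ee in H. Qed.

Lemma ward_left_inv (y : Q) : mul (mul e y) y = e.
Proof. now rewrite <- (ward_square_const e y), !ward_ee. Qed.

Lemma ward_mul_e_r (u : Q) : mul (mul e u) e = u.
Proof.
  destruct (solve_l e u) as [x <-].
  pose proof (ward_reduced e x x) as H. now rewrite ward_left_inv in H.
Qed.

Lemma ward_e_mul_mul_e (x : Q) : mul e (mul x e) = x.
Proof. apply (cancel_r e), ward_mul_e_r. Qed.

Lemma ward_mul_mul_e (x : Q) : mul x (mul x e) = e.
Proof.
  rewrite <- (ward_reduced x (mul x e) e), ward_mul_e_r.
  apply ward_left_inv.
Qed.

Lemma ward_swap (x y : Q) : mul (mul e y) (mul x e) = mul (mul x y) e.
Proof.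
  rewrite <- (ward_reduced x y (mul x e)), ward_mul_mul_e, ward_ee.
  now rewrite ward_mul_e_r.
Qed.

Lemma ward_mul_e_mul_e (x : Q) : mul (mul x e) e = x.
Proof. rewrite <- ward_swap, ward_ee. apply ward_e_mul_mul_e. Qed.

Lemma ward_e_comm (x : Q) : mul e x = mul x e.
Proof. apply (cancel_r e). now rewrite ward_mul_e_r, ward_mul_e_mul_e. Qed.

Lemma ward_e_invol (x : Q) : mul e (mul e x) = x.
Proof. rewrite (ward_e_comm x), ward_e_comm. apply ward_mul_e_mul_e. Qed.

Lemma ward_e_antimorph (x y : Q) :
  mul (mul e y) (mul e x) = mul e (mul x y).
Proof. rewrite (ward_e_comm x), (ward_e_comm (mul x y)). apply ward_swap. Qed.

Lemma diamondE (x y : Q) : diamond mul e x y = mul e (mul y x).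
Proof. apply ward_e_antimorph. Qed.

Lemma diamond_lateral : lateral_double_magma mul (diamond mul e).
Proof. intros x y z w. now rewrite !diamondE, ward_e_antimorph. Qed.

Lemma lateral_group_eq_diamond (circ : Q -> Q -> Q) :
  is_group_with_id circ e -> lateral_double_magma mul circ ->
  forall x y : Q, circ x y = diamond mul e x y.
Proof.
  intros [_ [Hid _]] Hlat x y.
  pose proof (Hlat (mul e x) e (mul e y) e) as H.
  rewrite (proj1 (Hid (mul e x))), (proj1 (Hid (mul e y))) in H.
  now rewrite <- !ward_e_comm, !ward_e_invol in H.
Qed.

End DoubleWard.

Theorem theorem4p6 (Q : Type) (mul : Q -> Q -> Q) (e : Q)
  (hW : is_double_ward mul e) :
  lateral_double_magma mul (diamond mul e) /\
  (forall circ : Q -> Q -> Q,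
     is_group_with_id circ e ->
     lateral_double_magma mul circ ->
     forall x y : Q, circ x y = diamond mul e x y).
Proof.
  split.
  - exact (diamond_lateral hW).
  - exact (lateral_group_eq_diamond hW).
Qed.
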